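(* Let $E$ be an $\mathbb{R}$-group, $X$ a locally compact (Hausdorff) space not reduced to one point, and $\mathcal{H}=(H_\varepsilon)_{\varepsilon\in E}$ a continuous action of $E$ on $X$. Suppose $\omega\in X$ satisfies condition (ABS). Then: (i) $H_\varepsilon(\omega)=\omega$ for all $\varepsilon\in E$; (ii) $\omega$ is the only point of $X$ satisfying (ABS).
   Context: An $\mathbb{R}$-group is an abelian group $E$ (operation written multiplicatively, $\varepsilon\varepsilon'$) whose underlying set is a subset of $\mathbb{R}$ containing all positive integers, such that: (RG1) with the natural order of $\mathbb{R}$, $E$ is a totally ordered group (the order is compatible with the group operation); (RG2) with the topology induced from $\mathbb{R}$, $E$ is a locally compact group; (RG3) there is at least one nonconstant continuous group homomorphism $h:E\to\mathbb{R}_+^*$ (the multiplicative group of positive reals) such that for every $\alpha\in E$ the set $E_\alpha=\{\varepsilon\in E:\varepsilon\ge\alpha\}$ is integrable for the measure $h\cdot m$, where $m$ is a Haar measure on $E$. Examples: $(\mathbb{R},+)$, $(\mathbb{Z},+)$, $(\mathbb{R}_+^*,\cdot)$. $e$ denotes the identity of $E$, $\varepsilon^{-1}$ the group inverse of $\varepsilon$, and $\theta=\inf E\in\mathbb{R}\cup\{\pm\infty\}$. Inequalities between elements of $E$ refer to the order of $\mathbb{R}$; ''$\varepsilon\to\theta$'' means $\varepsilon\to\theta$ within $E$. An action of $E$ on a set $X$ is a family $\mathcal{H}=(H_\varepsilon)_{\varepsilon\in E}$ of bijections of $X$ with $H_\varepsilon\circ H_{\varepsilon'}=H_{\varepsilon\varepsilon'}$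 and $H_e=\mathrm{id}_X$. It is continuous if $(\varepsilon,x)\mapsto H_\varepsilon(x)$ is continuous from $E\times X$ to $X$. A point $\omega\in X$ satisfies (ABS) if for every neighbourhood $V$ of $\omega$ and every $x\in X$ there exist a neighbourhood $U$ of $x$ and $\alpha\in E$ such that $H_{\varepsilon^{-1}}(U)\subset V$ for all $\varepsilon\in E$ with $\varepsilon\le\alpha$. *)

From Stdlib Require Import Reals Lra List Classical.
Open Scope R_scope.

Record Topology (X : Type) := {
  is_open : (X -> Prop) -> Prop;
  open_full : is_open (fun _ => True);
  open_union : forall (I : Type) (U : I -> X -> Prop),
      (forall i, is_open (U i)) -> is_open (fun x => exists i, U i x);
  open_inter : forall U V, is_open U -> is_open V ->
      is_open (fun x => U x /\ V x)
}.
Arguments is_open {X} _ _.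

Definition nbhd {X : Type} (T : Topology X) (V : X -> Prop) (x : X) : Prop :=
  exists U, is_open T U /\ U x /\ (forall y, U y -> V y).

Definition compact_set {X : Type} (T : Topology X) (K : X -> Prop) : Prop :=
  forall (I : Type) (U : I -> X -> Prop),
    (forall i, is_open T (U i)) ->
    (forall x, K x -> exists i, U i x) ->
    exists l : list I, forall x, K x -> exists i, In i l /\ U i x.

Definition hausdorff {X : Type} (T : Topology X) : Prop :=
  forall x y : X, x <> y ->
    exists U V, is_open T U /\ is_open T V /\ U x /\ V y /\
      (forall z, U z -> V z -> False).

Definition locally_compact {X : Type} (T : Topology X) : Prop :=
  forall x : X, exists K, compact_set T K /\ nbhd T K x.

Definition cont_on (S : R -> Prop) (f : R -> R) : Prop :=
  forall x, S x -> forall eps, 0 < eps ->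
    exists delta, 0 < delta /\
      forall y, S y -> Rabs (y - x) < delta -> Rabs (f y - f x) < eps.

(* f is continuous with compact support on S: S is the carrier, functions
   are only considered on S *)
Definition Cc_on (S : R -> Prop) (f : R -> R) : Prop :=
  cont_on S f /\
  exists K : R -> Prop, compact K /\ (forall x, K x -> S x) /\
    (forall x, S x -> ~ K x -> f x = 0).

Record RGroup := {
  rg_set : R -> Prop;
  rg_op : R -> R -> R;
  rg_e : R;
  rg_inv : R -> R;
  rg_nat : forall n : nat, (1 <= n)%nat -> rg_set (INR n);
  rg_op_closed : forall a b, rg_set a -> rg_set b -> rg_set (rg_op a b);
  rg_e_in : rg_set rg_e;
  rg_inv_closed : forall a, rg_set a -> rg_set (rg_inv a);
  rg_assoc : forall a b c, rg_set a -> rg_set b -> rg_set c ->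
      rg_op a (rg_op b c) = rg_op (rg_op a b) c;
  rg_comm : forall a b, rg_set a -> rg_set b -> rg_op a b = rg_op b a;
  rg_unit : forall a, rg_set a -> rg_op rg_e a = a;
  rg_invl : forall a, rg_set a -> rg_op (rg_inv a) a = rg_e;
  rg_order : forall a b c, rg_set a -> rg_set b -> rg_set c ->
      a <= b -> rg_op a c <= rg_op b c;
  rg_op_cont : forall a b, rg_set a -> rg_set b -> forall eps, 0 < eps ->
      exists delta, 0 < delta /\
        forall a' b', rg_set a' -> rg_set b' ->
          Rabs (a' - a) < delta -> Rabs (b' - b) < delta ->
          Rabs (rg_op a' b' - rg_op a b) < eps;
  rg_inv_cont : cont_on rg_set rg_inv;
  rg_loc_compact : forall a, rg_set a -> exists delta, 0 < delta /\
      compact (fun x => rg_set x /\ a - delta <= x <= a + delta);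
  rg_RG3 : exists h : R -> R,
      cont_on rg_set h /\
      (forall a, rg_set a -> 0 < h a) /\
      (forall a b, rg_set a -> rg_set b -> h (rg_op a b) = h a * h b) /\
      (exists a b, rg_set a /\ rg_set b /\ h a <> h b) /\
      (* a Haar measure m on E, given as a (Riesz) Haar integral I on
         continuous compactly supported functions on E *)
      exists I : (R -> R) -> R,
        (forall f g, (forall x, rg_set x -> f x = g x) -> I f = I g) /\
        (forall f g, Cc_on rg_set f -> Cc_on rg_set g ->
            I (fun x => f x + g x) = I f + I g) /\
        (forall c f, Cc_on rg_set f -> I (fun x => c * f x) = c * I f) /\
        (forall f, Cc_on rg_set f -> (forall x, rg_set x -> 0 <= f x) ->
            0 <= I f) /\
        (exists f, Cc_on rg_set f /\ (forall x, rg_set x -> 0 <= f x) /\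
            0 < I f) /\
        (forall a f, rg_set a -> Cc_on rg_set f ->
            I (fun x => f (rg_op a x)) = I f) /\
        (* every E_alpha = {eps in E | eps >= alpha} is (h.m)-integrable *)
        (forall alpha, rg_set alpha -> exists M,
           forall f, Cc_on rg_set f ->
             (forall x, rg_set x -> 0 <= f x <= 1) ->
             (forall x, rg_set x -> x < alpha -> f x = 0) ->
             I (fun x => f x * h x) <= M)
}.

Definition is_action (E : RGroup) {X : Type} (H : R -> X -> X) : Prop :=
  (forall eps, rg_set E eps ->
     (forall x y, H eps x = H eps y -> x = y) /\
     (forall y, exists x, H eps x = y)) /\
  (forall eps eps', rg_set E eps -> rg_set E eps' ->
     forall x, H eps (H eps' x) = H (rg_op E eps eps') x) /\
  (forall x, H (rg_e E) x = x).

Definition action_continuous (E : RGroup) {X : Type} (T : Topology X)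
    (H : R -> X -> X) : Prop :=
  forall eps x, rg_set E eps -> forall W, is_open T W -> W (H eps x) ->
    exists delta U, 0 < delta /\ is_open T U /\ U x /\
      forall eps' y, rg_set E eps' -> Rabs (eps' - eps) < delta -> U y ->
        W (H eps' y).

Definition ABS (E : RGroup) {X : Type} (T : Topology X)
    (H : R -> X -> X) (omega : X) : Prop :=
  forall V, nbhd T V omega -> forall x : X,
    exists U alpha, nbhd T U x /\ rg_set E alpha /\
      forall eps, rg_set E eps -> eps <= alpha ->
        forall y, U y -> V (H (rg_inv E eps) y).

(** The net [ε ↦ H_{ε⁻¹}(x)], indexed by [E] and directed towards [inf E],
    converges to [ω] for every [x]: this is exactly (ABS). Limits in a
    Hausdorff space are unique, so two points satisfying (ABS) coincide
    (take [x = ω]). For (i), [H_η] commutes with every [H_{ε⁻¹}] and is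
    continuous, so it maps the limit [ω] of the net at [x = ω] to the limit
    of the net at [x = H_η(ω)], which is [ω] again. *)

From Stdlib Require Import Reals Classical.
Open Scope R_scope.

Section NetsTowardsInf.

Variables (E : RGroup) (X : Type) (T : Topology X).

Definition tends_to_inf (f : R -> X) (l : X) : Prop :=
  forall V, nbhd T V l -> exists alpha, rg_set E alpha /\
    forall eps, rg_set E eps -> eps <= alpha -> V (f eps).

Lemma nbhd_mem V x : nbhd T V x -> V x.
Proof. intros [U [_ [Ux UV]]]; auto. Qed.

Lemma open_nbhd U x : is_open T U -> U x -> nbhd T U x.
Proof. intros; exists U; auto. Qed.

Lemma rg_Rmin_in a b : rg_set E a -> rg_set E b -> rg_set E (Rmin a b).
Proof. intros; unfold Rmin; destruct (Rle_dec a b); auto. Qed.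

Lemma tends_to_inf_unique f l l' :
  hausdorff T -> tends_to_inf f l -> tends_to_inf f l' -> l = l'.
Proof.
  intros HT Hl Hl'; apply NNPP; intro Hne.
  destruct (HT _ _ Hne) as [V [V' [HV [HV' [Vl [V'l' Hdisj]]]]]].
  destruct (Hl V (open_nbhd _ _ HV Vl)) as [a [Ea Ha]].
  destruct (Hl' V' (open_nbhd _ _ HV' V'l')) as [a' [Ea' Ha']].
  pose proof (rg_Rmin_in _ _ Ea Ea') as Em.
  apply (Hdisj (f (Rmin a a'))).
  - apply Ha; [exact Em | apply Rmin_l].
  - apply Ha'; [exact Em | apply Rmin_r].
Qed.

Lemma tends_to_inf_map (g : X -> X) f l :
  (forall W, is_open T W -> W (g l) ->
     exists U, is_open T U /\ U l /\ forall y, U y -> W (g y)) ->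
  tends_to_inf f l -> tends_to_inf (fun eps => g (f eps)) (g l).
Proof.
  intros Hg Hf V [W [HW [Wgl WV]]].
  destruct (Hg W HW Wgl) as [U [HU [Ul UW]]].
  destruct (Hf U (open_nbhd _ _ HU Ul)) as [a [Ea Ha]].
  exists a; split; auto.
Qed.

Variable H : R -> X -> X.

Lemma ABS_tends_to_inf omega x :
  ABS E T H omega -> tends_to_inf (fun eps => H (rg_inv E eps) x) omega.
Proof.
  intros Habs V HV.
  destruct (Habs V HV x) as [U [a [HU [Ea Ha]]]].
  exists a; split; auto.
  intros eps Eeps Hle; apply Ha; [exact Eeps | exact Hle | exact (nbhd_mem U x HU)].
Qed.

Lemma action_continuous_at eta x :
  action_continuous E T H -> rg_set E eta ->
  forall W, is_open T W -> W (H eta x) ->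
    exists U, is_open T U /\ U x /\ forall y, U y -> W (H eta y).
Proof.
  intros Hcont Eeta W HW Wx.
  destruct (Hcont eta x Eeta W HW Wx) as [d [U [Hd [HU [Ux UW]]]]].
  exists U; repeat split; auto.
  intros y Uy; apply UW; auto.
  rewrite Rminus_diag, Rabs_R0; exact Hd.
Qed.

Lemma action_comm eta eps x :
  is_action E H -> rg_set E eta -> rg_set E eps ->
  H eps (H eta x) = H eta (H eps x).
Proof.
  intros [_ [Hcomp _]] Eeta Eeps.
  rewrite !Hcomp, rg_comm; auto.
Qed.

End NetsTowardsInf.

Theorem proposition2p2 (E : RGroup) (X : Type) (T : Topology X)
    (HT : hausdorff T) (HLC : locally_compact T)
    (Hnt : exists x y : X, x <> y)
    (H : R -> X -> X) (Hact : is_action E H)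
    (Hcont : action_continuous E T H)
    (omega : X) (Habs : ABS E T H omega) :
  (forall eps, rg_set E eps -> H eps omega = omega) /\
  (forall omega' : X, ABS E T H omega' -> omega' = omega).
Proof.
  split.
  - intros eta Eeta.
    apply (tends_to_inf_unique E X T (fun eps => H (rg_inv E eps) (H eta omega)));
      auto using ABS_tends_to_inf.
    intros V HV.
    destruct (tends_to_inf_map E X T (H eta) _ _
                (action_continuous_at E X T H eta omega Hcont Eeta)
                (ABS_tends_to_inf E X T H omega omega Habs) V HV)
      as [a [Ea Ha]].
    exists a; split; auto.
    intros eps Eeps Hle.
    rewrite (action_comm E X H eta (rg_inv E eps) omega Hact Eeta
               (rg_inv_closed E eps Eeps)).
    exact (Ha eps Eeps Hle).
  - intros omega' Habs'.
    exact (tends_to_inf_unique E X T _ _ _ HT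
             (ABS_tends_to_inf E X T H omega' omega Habs')
             (ABS_tends_to_inf E X T H omega omega Habs)).
Qed.
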